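(* Assume the drift assumption and the perturbation assumption below, and let $f,c_0,\varphi_0$ be as constructed below. Given $\delta>0$, let $\lambda:\mathbb R^d\to\mathbb R$ be a smooth function with $|\lambda(z)|\le1$ for all $z$ and $\lambda(z)=1$ for $|z|\ge\delta$. If $L<\frac{c_0\varphi_0\sigma^2}{8}$, then with $c:=c_0\sigma^2/2$, for all $X,Y\in\mathbb R^{Nd}$, writing $Z=X-Y$ and $r^i=|Z^i|$, $$\sum_{i=1}^N\Big((r^i)^{-1}Z^i\cdot(b^i(X)-b^i(Y))f'(r^i)+2\sigma^2\lambda^2(Z^i)f''(r^i)\Big)\le N m(\delta)-c\sum_{i=1}^Nf(r^i),$$ where $m(\delta)=\frac{\sigma^2}{2}\sup_{0<r<\delta}\big(r\kappa(r)^-\big)+c_0\sigma^2\delta$ and $x^-=-\min\{x,0\}$.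
   Context: Let $N\ge1$, $d\ge1$, $\sigma>0$, $b:\mathbb R^d\to\mathbb R^d$, $\gamma^i:\mathbb R^{Nd}\to\mathbb R^d$ ($i=1,\dots,N$), and $b^i(x)=b(x^i)+\gamma^i(x)$ for $x=(x^1,\dots,x^N)\in\mathbb R^{Nd}$. When $Z^i=0$, the term $(r^i)^{-1}Z^i\cdot(b^i(X)-b^i(Y))f'(r^i)$ is taken to be $0$. Drift assumption: there is $\kappa:(0,\infty)\to\mathbb R$ with $\kappa(r)\le\inf\{-\frac{2}{\sigma^2}\frac{(x-y)\cdot(b(x)-b(y))}{|x-y|^2}: |x-y|=r\}$, continuous on $(0,\infty)$, bounded below on $(0,\infty)$, with $\liminf_{r\to\infty}\kappa(r)>0$. Perturbation assumption: $\sum_{i=1}^N|\gamma^i(x)-\gamma^i(y)|\le L\sum_{i=1}^N|x^i-y^i|$ for all $x,y$. Construction of $f,c_0,\varphi_0$: $\kappa(r)^-=\max\{-\kappa(r),0\}$; $R_0=\inf\{R\ge0:\kappa(r)\ge0\ \forall r\ge R\}$; $R_1=\inf\{R\ge R_0:\kappa(r)R(R-R_0)\ge16\ \forall r\ge R\}$; $\varphi(r)=\exp(-\frac14\int_0^r s\kappa(s)^-ds)$; $\Phi(r)=\int_0^r\varphi$; $I=\int_0^{R_1}\frac{\Phi(s)}{\varphi(s)}ds$; $c_0=1/I$; $\varphi_0=\exp(-\frac14\int_0^{R_0}s\kappa(s)^-ds)$; $\eta=\frac{\Phi(R_1)}{2\varphi(R_1)I}$; $g(r)=1-\frac1{2I}\int_0^r\frac{\Phi(s)}{\varphi(s)}ds$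 for $r\le R_1$, $g(r)=\frac12-\frac{\eta(r-R_1)}{1+4\eta(r-R_1)}$ for $r>R_1$; $f(r)=\int_0^r\varphi(s)g(s)\,ds$. *)

From Stdlib Require Import Reals.
From Coquelicot Require Import Coquelicot.
From mathcomp Require Import ssreflect ssrfun ssrbool eqtype ssrnat seq fintype bigop.

Set Implicit Arguments.
Unset Strict Implicit.
Local Open Scope R_scope.

Definition vec (d : nat) := 'I_d -> R.

Definition rsum (n : nat) (F : 'I_n -> R) : R := \big[Rplus/0]_(i < n) F i.

Definition vadd {d} (u v : vec d) : vec d := fun k => u k + v k.
Definition vsub {d} (u v : vec d) : vec d := fun k => u k - v k.
Definition dot {d} (u v : vec d) : R := rsum (fun k => u k * v k).
Definition vnorm {d} (u : vec d) : R := sqrt (dot u u).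
Definition ebasis {d} (k : 'I_d) : vec d := fun j => if j == k then 1 else 0.
Definition shift {d} (x : vec d) (t : R) (k : 'I_d) : vec d :=
  fun j => x j + t * ebasis k j.

Fixpoint dpart {d} (ks : seq 'I_d) (h : vec d -> R) : vec d -> R :=
  match ks with
  | nil => h
  | k :: ks' => fun x => Derive (fun t => dpart ks' h (shift x t k)) 0
  end.

Definition vcontinuous {d} (h : vec d -> R) : Prop :=
  forall x eps, 0 < eps -> exists del, 0 < del /\
    forall y, vnorm (vsub y x) < del -> Rabs (h y - h x) < eps.

Definition smooth {d} (h : vec d -> R) : Prop :=
  forall ks : seq 'I_d,
    vcontinuous (dpart ks h) /\
    (forall x k, ex_derive (fun t => dpart ks h (shift x t k)) 0).

Definition drift_assumption {d} (sigma : R) (b : vec d -> vec d) (kappa : R -> R) : Prop :=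
  (forall r, 0 < r -> forall x y : vec d, vnorm (vsub x y) = r ->
     kappa r <= - (2 / sigma ^ 2) * dot (vsub x y) (vsub (b x) (b y)) / (vnorm (vsub x y)) ^ 2)
  /\ (forall r, 0 < r -> continuous kappa r)
  /\ (exists m, forall r, 0 < r -> m <= kappa r)
  /\ (exists eps, 0 < eps /\ exists R0, forall r, R0 <= r -> 0 < r -> eps <= kappa r).

Definition perturbation_assumption {N d} (gamma : 'I_N -> ('I_N -> vec d) -> vec d) (L : R) : Prop :=
  forall x y : 'I_N -> vec d,
    rsum (fun i => vnorm (vsub (gamma i x) (gamma i y))) <= L * rsum (fun i => vnorm (vsub (x i) (y i))).

Definition kminus (kappa : R -> R) (s : R) : R :=
  if Rlt_dec 0 s then Rmax (- kappa s) 0 else 0.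

Definition R0c (kappa : R -> R) : R :=
  real (Glb_Rbar (fun R => 0 <= R /\ forall r, R <= r -> 0 < r -> 0 <= kappa r)).
Definition R1c (kappa : R -> R) : R :=
  real (Glb_Rbar (fun R => R0c kappa <= R /\
     forall r, R <= r -> 0 < r -> 16 <= kappa r * R * (R - R0c kappa))).

Definition phi (kappa : R -> R) (r : R) : R :=
  exp (- (1/4) * RInt (fun s => s * kminus kappa s) 0 r).
Definition Phi (kappa : R -> R) (r : R) : R := RInt (phi kappa) 0 r.
Definition Ic (kappa : R -> R) : R :=
  RInt (fun s => Phi kappa s / phi kappa s) 0 (R1c kappa).
Definition c0 (kappa : R -> R) : R := / Ic kappa.
Definition phi0 (kappa : R -> R) : R :=
  exp (- (1/4) * RInt (fun s => s * kminus kappa s) 0 (R0c kappa)).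
Definition eta (kappa : R -> R) : R :=
  Phi kappa (R1c kappa) / (2 * phi kappa (R1c kappa) * Ic kappa).
Definition gfun (kappa : R -> R) (r : R) : R :=
  if Rle_dec r (R1c kappa) then
    1 - / (2 * Ic kappa) * RInt (fun s => Phi kappa s / phi kappa s) 0 r
  else
    1/2 - eta kappa * (r - R1c kappa) / (1 + 4 * eta kappa * (r - R1c kappa)).
Definition ffun (kappa : R -> R) (r : R) : R :=
  RInt (fun s => phi kappa s * gfun kappa s) 0 r.

Definition m_delta (sigma : R) (kappa : R -> R) (delta : R) : R :=
  sigma ^ 2 / 2 * real (Lub_Rbar (fun v => exists r, 0 < r < delta /\ v = r * kminus kappa r))
  + c0 kappa * sigma ^ 2 * delta.

Definition bi {N d} (b : vec d -> vec d) (gamma : 'I_N -> ('I_N -> vec d) -> vec d)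
  (i : 'I_N) (x : 'I_N -> vec d) : vec d := vadd (b (x i)) (gamma i x).

Definition lhs_term {N d} (sigma : R) (kappa : R -> R) (b : vec d -> vec d)
  (gamma : 'I_N -> ('I_N -> vec d) -> vec d) (lam : vec d -> R)
  (X Y : 'I_N -> vec d) (i : 'I_N) : R :=
  let Z := vsub (X i) (Y i) in
  let r := vnorm Z in
  (if Req_EM_T r 0 then 0
   else / r * dot Z (vsub (bi b gamma i X) (bi b gamma i Y)) * Derive (ffun kappa) r)
  + 2 * sigma ^ 2 * (lam Z) ^ 2 * Derive (Derive (ffun kappa)) r.

(* The profile f is increasing and concave with 0 <= f' <= 1 and phi0 r / 4 <= f r <= r, and it
   satisfies f'' - r kappa f' / 4 <= - c0 f / 2 on (0, oo): below R1 by the choice of phi and of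
   g = 1 - (2 I)^-1 int Phi / phi, beyond R1 because kappa r (R1^2 - R0^2) >= 16 there.
   In each summand the drift assumption bounds the radial drift by - sigma^2 kappa(r) r / 2.
   If r >= delta then lambda = 1 and the summand is at most 2 sigma^2 (f'' - r kappa f' / 4)
   <= - c0 sigma^2 f(r); if r < delta, concavity, f' <= 1 and f(r) <= r bound it by
   m(delta) - c0 sigma^2 f(r). Since f' <= 1, the perturbation adds at most
   |gamma^i(X) - gamma^i(Y)|, and summed over i this is at most
   L sum r^i <= (4 L / phi0) sum f(r^i), which L < c0 phi0 sigma^2 / 8 absorbs into half of
   the contraction. *)

From Pilot Require Import Defs.
From Stdlib Require Import Reals Lra Psatz Classical.
From Coquelicot Require Import Coquelicot.
From mathcomp Require Import ssreflect ssrfun ssrbool eqtype ssrnat seq fintype bigop.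
Local Open Scope R_scope.

Lemma Glb_Rbar_real_spec (E : R -> Prop) (a x0 : R) :
  (forall x, E x -> a <= x) -> E x0 ->
  [/\ a <= real (Glb_Rbar E), forall x, E x -> real (Glb_Rbar E) <= x
    & forall r, real (Glb_Rbar E) < r -> exists x, E x /\ x < r].
Proof.
move=> Ea Ex0; have [glbE glb_max] := Glb_Rbar_correct E.
have a_glb : Rbar_le a (Glb_Rbar E) by apply: glb_max => x /Ea.
case: (Glb_Rbar E) glbE glb_max a_glb => [g| |] glbE glb_max //= a_g;
  last by have := glbE _ Ex0.
split=> [//|x /glbE //|r g_r]; apply: NNPP => no_x.
have : Rbar_le r g.
  by apply: glb_max => x Ex /=; apply: Rnot_lt_le => x_r; apply: no_x; exists x.
rewrite /=; lra.
Qed.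

Lemma Lub_Rbar_real_ub (E : R -> Prop) (b x0 : R) :
  (forall x, E x -> x <= b) -> E x0 -> forall x, E x -> x <= real (Lub_Rbar E).
Proof.
move=> Eb Ex0; have [lubE lub_min] := Lub_Rbar_correct E.
have lub_b : Rbar_le (Lub_Rbar E) b by apply: lub_min => x /Eb.
case: (Lub_Rbar E) lubE lub_min lub_b => [l| |] lubE lub_min //= _.
by have := lubE _ Ex0.
Qed.

Lemma ball_R (x e y : R) : ball x e y <-> Rabs (y - x) < e.
Proof. by []. Qed.

Lemma continuous_dominated (F G : R -> R) x :
  continuous G x ->
  locally x (fun y => Rabs (F y - F x) <= Rabs (G y - G x)) ->
  continuous F x.
Proof.
move=> /filterlim_locally G_cont F_G; apply/filterlim_locally => e.
apply: filter_imp (filter_and _ _ (G_cont e) F_G) => y [Gy Fy].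
by move/ball_R: Gy => Gy; apply/ball_R; lra.
Qed.

Lemma continuous_piecewise (a : R) (f g : R -> R) x :
  (x <= a -> continuous f x) -> (a <= x -> continuous g x) -> f a = g a ->
  continuous (fun y => if Rle_dec y a then f y else g y) x.
Proof.
move=> f_cont g_cont fa_ga.
case: (Rtotal_order x a) => [x_a|[x_a|x_a]].
- apply: (continuous_ext_loc _ f); last by apply: f_cont; lra.
  apply: (locally_interval _ _ m_infty a) => //= y _ y_a.
  by case: Rle_dec => // ?; lra.
- subst x; move/filterlim_locally: (f_cont (Rle_refl a)) => fa.
  move/filterlim_locally: (g_cont (Rle_refl a)) => ga.
  apply/filterlim_locally => e.
  apply: filter_imp (filter_and _ _ (fa e) (ga e)) => y [fy gy] /=.
  destruct (Rle_dec a a) as [a_a|]; last lra.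
  by destruct (Rle_dec y a); rewrite //= fa_ga.
- apply: (continuous_ext_loc _ g); last by apply: g_cont; lra.
  apply: (locally_interval _ _ a p_infty) => //= y a_y _.
  by case: Rle_dec => // ?; lra.
Qed.

Lemma le_of_right_approx (F : R -> R) (g c : R) :
  continuous F g ->
  (forall e, 0 < e -> exists x, g <= x < g + e /\ c <= F x) -> c <= F g.
Proof.
move=> F_cont approx; apply: Rnot_lt_le => Fg_c.
have near_g : locally g (fun y => F y < c).
  move/filterlim_locally: F_cont => /(_ (mkposreal _ (proj2 (Rlt_0_minus _ _) Fg_c))).
  by apply: filter_imp => y /ball_R /= /Rabs_def2; lra.
have [[e e_pos] ball_e] := near_g.
have [x [[g_x x_g] c_Fx]] := approx e e_pos.
suff : F x < c by lra.
by apply: ball_e; apply/ball_R; rewrite /= Rabs_pos_eq; lra.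
Qed.

Section IntegralsOfContinuous.
Context {f : R -> R}.
Hypothesis f_cont : forall x, continuous f x.

Lemma ex_RInt_cont a b : ex_RInt f a b.
Proof. by apply: ex_RInt_continuous => z _; apply: f_cont. Qed.

Lemma is_derive_RInt_cont a x : is_derive (RInt f a) x (f x).
Proof.
apply: is_derive_RInt (f_cont x).
by apply: filter_forall => y; apply: RInt_correct; apply: ex_RInt_cont.
Qed.

Lemma RInt_Chasles_cont a b c : RInt f a c = RInt f a b + RInt f b c.
Proof. by rewrite -(RInt_Chasles f a b c) //; apply: ex_RInt_cont. Qed.

Lemma RInt_ge_const a b m : a <= b -> (forall x, a < x < b -> m <= f x) ->
  m * (b - a) <= RInt f a b.
Proof.
move=> a_b m_f.
have := RInt_le (fun _ => m) f a b a_b (ex_RInt_const _ _ _) (ex_RInt_cont a b) m_f.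
by rewrite RInt_const /scal /= /mult /=; lra.
Qed.

Lemma RInt_le_const a b m : a <= b -> (forall x, a < x < b -> f x <= m) ->
  RInt f a b <= m * (b - a).
Proof.
move=> a_b f_m.
have := RInt_le f (fun _ => m) a b a_b (ex_RInt_cont a b) (ex_RInt_const _ _ _) f_m.
by rewrite RInt_const /scal /= /mult /=; lra.
Qed.

Lemma RInt_ge0_cont a b : a <= b -> (forall x, a < x < b -> 0 <= f x) ->
  0 <= RInt f a b.
Proof. by move=> a_b f_ge0; have := RInt_ge_const a b 0 a_b f_ge0; lra. Qed.

End IntegralsOfContinuous.

Lemma RInt_le_cont (f g : R -> R) a b : a <= b ->
  (forall x, continuous f x) -> (forall x, continuous g x) ->
  (forall x, a < x < b -> f x <= g x) -> RInt f a b <= RInt g a b.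
Proof. by move=> a_b f_cont g_cont; apply: RInt_le => //; apply: ex_RInt_cont. Qed.

Lemma RInt_id_scal C a b : RInt (fun s => C * s) a b = C * (b * b - a * a) / 2.
Proof.
apply: is_RInt_unique.
have -> : C * (b * b - a * a) / 2 = minus (C * b * b / 2) (C * a * a / 2).
  by rewrite /minus /plus /opp /=; field.
apply: (is_RInt_derive (fun s => C * s * s / 2)) => x _.
- by auto_derive => //; field.
- exact: (continuous_mult (fun _ => C) id x (continuous_const C x) (continuous_id x)).
Qed.

Lemma rsum_le {n} (F G : 'I_n -> R) : (forall i, F i <= G i) -> rsum F <= rsum G.
Proof.
by move=> FG; apply: (big_rec2 (fun x y => x <= y)) => [|i x y _ xy]; [lra | have := FG i; lra].
Qed.

Lemma rsumD {n} (F G : 'I_n -> R) : rsum (fun i => F i + G i) = rsum F + rsum G.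
Proof.
by apply: (big_rec3 (fun x y z => x = y + z)) => [|i x y z _ ->]; ring.
Qed.

Lemma rsumB {n} (F G : 'I_n -> R) : rsum (fun i => F i - G i) = rsum F - rsum G.
Proof.
by apply: (big_rec3 (fun x y z => x = y - z)) => [|i x y z _ ->]; ring.
Qed.

Lemma rsumZ {n} c (F : 'I_n -> R) : rsum (fun i => c * F i) = c * rsum F.
Proof. by apply: (big_rec2 (fun x y => x = c * y)) => [|i x y _ ->]; ring. Qed.

Lemma rsum_const {n} c : rsum (fun _ : 'I_n => c) = INR n * c.
Proof.
rewrite /rsum big_const_ord.
by elim: n => [|n IH]; [rewrite /=; ring | rewrite S_INR /= IH; ring].
Qed.

Lemma rsum_ge0 {n} (F : 'I_n -> R) : (forall i, 0 <= F i) -> 0 <= rsum F.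
Proof. by move=> F_ge0; have := @rsum_le n (fun _ => 0) F F_ge0; rewrite rsum_const; lra. Qed.

Lemma dot_addr {d} (u v w : vec d) : dot u (vadd v w) = dot u v + dot u w.
Proof. by rewrite /dot -rsumD; apply: eq_bigr => i _; rewrite /vadd; ring. Qed.

Lemma dot_ge0 {d} (u : vec d) : 0 <= dot u u.
Proof. by apply: rsum_ge0 => i; apply: Rle_0_sqr. Qed.

Lemma vnorm_ge0 {d} (u : vec d) : 0 <= vnorm u.
Proof. exact: sqrt_pos. Qed.

Lemma vnorm_mul_self {d} (u : vec d) : vnorm u * vnorm u = dot u u.
Proof. by rewrite /vnorm sqrt_sqrt //; apply: dot_ge0. Qed.

Lemma dot_le_AM_GM {d} (u v : vec d) a : 0 < a ->
  2 * dot u v <= a * dot u u + dot v v / a.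
Proof.
move=> a_gt0.
have : rsum (fun i => 2 * (u i * v i))
       <= rsum (fun i => a * (u i * u i) + / a * (v i * v i)).
  apply: rsum_le => i.
  have sq_ge0 : 0 <= (a * u i - v i) * (a * u i - v i) / a.
    by apply: Rdiv_le_0_compat => //; apply: Rle_0_sqr.
  have : (a * u i - v i) * (a * u i - v i) / a
         = a * (u i * u i) + / a * (v i * v i) - 2 * (u i * v i) by field; lra.
  lra.
by rewrite rsumD !rsumZ /Rdiv [_ * / a]Rmult_comm.
Qed.

Lemma dot_le_vnorm_mul {d} (u v : vec d) : 0 < vnorm u -> dot u v <= vnorm u * vnorm v.
Proof.
move=> u_gt0.
have uu_gt0 : 0 < vnorm u * vnorm u by apply: Rmult_lt_0_compat.
case: (Req_dec (vnorm v) 0) => [v0 | v_ne0].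
- rewrite v0 !Rmult_0_r; apply: Rnot_lt_le => uv_gt0.
  have := dot_le_AM_GM u v _ (Rdiv_lt_0_compat _ _ uv_gt0 uu_gt0).
  rewrite -(vnorm_mul_self u) -(vnorm_mul_self v) v0 Rmult_0_r /Rdiv Rmult_0_l.
  have -> : dot u v * / (vnorm u * vnorm u) * (vnorm u * vnorm u) = dot u v by field; lra.
  lra.
- have v_gt0 : 0 < vnorm v by have := vnorm_ge0 v; lra.
  have := dot_le_AM_GM u v _ (Rdiv_lt_0_compat _ _ v_gt0 u_gt0).
  rewrite -(vnorm_mul_self u) -(vnorm_mul_self v).
  have -> : vnorm v / vnorm u * (vnorm u * vnorm u) + vnorm v * vnorm v / (vnorm v / vnorm u)
            = 2 * (vnorm u * vnorm v) by field; lra.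
  lra.
Qed.

Definition kappa_drift_bound {d} sigma (b : vec d -> vec d) (kappa : R -> R) :=
  forall r, 0 < r -> forall x y : vec d, vnorm (vsub x y) = r ->
    kappa r <= - (2 / sigma ^ 2) * dot (vsub x y) (vsub (b x) (b y)) / (vnorm (vsub x y)) ^ 2.

Section Profile.
Context {kappa : R -> R}.
Hypothesis kappa_cont : forall r, 0 < r -> continuous kappa r.
Context {kappa_min : R}.
Hypothesis kappa_ge_min : forall r, 0 < r -> kappa_min <= kappa r.
Context {eps Rtail : R}.
Hypothesis eps_gt0 : 0 < eps.
Hypothesis kappa_tail : forall r, Rtail <= r -> 0 < r -> eps <= kappa r.

Notation R0 := (R0c kappa).
Notation R1 := (R1c kappa).

Lemma R0c_spec : 0 <= R0 /\ forall r, R0 < r -> 0 <= kappa r.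
Proof.
have [] := @Glb_Rbar_real_spec
  (fun R => 0 <= R /\ forall r, R <= r -> 0 < r -> 0 <= kappa r) 0 (Rmax Rtail 0).
- by move=> x [].
- split=> [|r r_ge r_gt0]; first exact: Rmax_r.
  have := kappa_tail r; have := Rmax_l Rtail 0; move=> ? /(_ ltac:(lra) r_gt0); lra.
move=> R0_ge0 _ R0_inf; split=> // r /R0_inf [x [[x_ge0 x_spec] x_r]].
by apply: x_spec; lra.
Qed.

Lemma R1c_spec : R0 < R1 /\ forall r, R1 < r -> 16 <= kappa r * R1 * (R1 - R0).
Proof.
have [R0_ge0 kappa_ge0] := R0c_spec.
have [] := @Glb_Rbar_real_spec (fun R => R0 <= R /\
     forall r, R <= r -> 0 < r -> 16 <= kappa r * R * (R - R0)) R0 (Rmax Rtail (R0 + 1 + 16 / eps)).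
- by move=> x [].
- have := Rmax_l Rtail (R0 + 1 + 16 / eps); have := Rmax_r Rtail (R0 + 1 + 16 / eps).
  set x0 := Rmax _ _ => x0_big x0_tail.
  have : 0 < 16 / eps by apply: Rdiv_lt_0_compat; lra.
  split=> [|r r_ge r_gt0]; first lra.
  have x0_prod : 1 * (16 / eps) <= x0 * (x0 - R0) by apply: Rmult_le_compat; lra.
  have <- : eps * (16 / eps) = 16 by field; lra.
  rewrite Rmult_assoc; apply: Rmult_le_compat; try lra.
  by apply: kappa_tail; lra.
rewrite /R1c -/(R0c kappa); set g := real _ => R0_g g_lb g_inf.
have g_spec r : g < r -> 16 <= kappa r * g * (g - R0).
  move=> g_r; apply: (le_of_right_approx (fun x => kappa r * x * (x - R0))).
    by apply: ex_derive_continuous; auto_derive.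
  move=> e e_gt0.
  have [x [[x_R0 x_spec] x_lt]] := g_inf (Rmin (g + e) r) (Rmin_glb_lt (g + e) r g ltac:(lra) g_r).
  have := Rmin_l (g + e) r; have := Rmin_r (g + e) r; have := g_lb x (conj x_R0 x_spec).
  by exists x; split; [lra | apply: x_spec; lra].
split=> //; apply: Rnot_le_lt => g_R0.
have := g_spec (g + 1) ltac:(lra).
have -> : g = R0 by lra.
by rewrite Rminus_diag Rmult_0_r; lra.
Qed.

Lemma kminus_bounds s : 0 <= kminus kappa s <= Rmax (- kappa_min) 0.
Proof.
rewrite /kminus; have := Rmax_r (- kappa_min) 0; case: Rlt_dec => [s_gt0|_] /=; last lra.
split; first exact: Rmax_r.
by apply: Rmax_le_compat; have := kappa_ge_min s s_gt0; lra.
Qed.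

Lemma neg_kappa_le_kminus s : 0 < s -> - kappa s <= kminus kappa s.
Proof. by rewrite /kminus; case: Rlt_dec => //= _ _; apply: Rmax_l. Qed.

Lemma kminus_eq0 s : R0 < s -> kminus kappa s = 0.
Proof.
have [R0_ge0 kappa_ge0] := R0c_spec => R0_s; rewrite /kminus.
by case: Rlt_dec => //= _; rewrite Rmax_right //; have := kappa_ge0 s R0_s; lra.
Qed.

Definition rkminus s := s * kminus kappa s.

Lemma rkminus_ge0 s : 0 <= s -> 0 <= rkminus s.
Proof. by move=> s_ge0; have := kminus_bounds s; rewrite /rkminus; nra. Qed.

Lemma kminus_cont s : 0 < s -> continuous (kminus kappa) s.
Proof.
move=> s_gt0; apply: (continuous_dominated _ kappa); first exact: kappa_cont.
apply: (locally_interval _ _ 0 p_infty) => //= y y_gt0 _; rewrite /kminus.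
case: Rlt_dec => //= _; case: Rlt_dec => //= _.
rewrite /Rmax; case: Rle_dec; case: Rle_dec => ? ?; rewrite /Rabs; repeat case: Rcase_abs; lra.
Qed.

Lemma rkminus_cont s : continuous rkminus s.
Proof.
case: (Rtotal_order s 0) => [s_lt0|[->|s_gt0]].
- apply: (continuous_ext_loc _ (fun _ => 0)); last exact: continuous_const.
  apply: (locally_interval _ _ m_infty 0) => //= y _ y_lt0.
  by rewrite /rkminus /kminus; case: Rlt_dec => /= ?; [lra | ring].
- apply: (continuous_dominated _ (fun y => Rmax (- kappa_min) 0 * y)).
    exact: continuous_mult (continuous_const _ 0) (continuous_id 0).
  apply: filter_forall => y; rewrite /rkminus.
  have -> : kminus kappa 0 = 0 by rewrite /kminus; case: Rlt_dec => //= ?; lra.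
  rewrite !Rmult_0_r !Rminus_0_r !Rabs_mult (Rabs_pos_eq (Rmax _ 0)); last exact: Rmax_r.
  have := kminus_bounds y; have := Rabs_pos y => ? ?.
  by rewrite (Rabs_pos_eq (kminus kappa y)); [nra | lra].
- exact: (continuous_mult (fun y => y) (kminus kappa) s (continuous_id s) (kminus_cont s s_gt0)).
Qed.

Lemma RInt_rkminus_le a b : 0 <= a <= b -> RInt rkminus 0 a <= RInt rkminus 0 b.
Proof.
move=> ab; rewrite (RInt_Chasles_cont rkminus_cont 0 a b).
have := RInt_ge0_cont rkminus_cont a b (proj2 ab) (fun x x_ab => rkminus_ge0 x ltac:(lra)); lra.
Qed.

Lemma RInt_rkminus_tail r : R0 <= r -> RInt rkminus 0 r = RInt rkminus 0 R0.
Proof.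
move=> R0_r; rewrite (RInt_Chasles_cont rkminus_cont 0 R0 r).
rewrite (RInt_ext rkminus (fun _ => 0) R0 r) ?RInt_const /scal /= /mult /=; first ring.
rewrite Rmin_left // Rmax_right // => x x_R0.
by rewrite /rkminus kminus_eq0 ?Rmult_0_r //; lra.
Qed.

Notation ph := (phi kappa).
Notation Ph := (Phi kappa).
Notation phi0k := (phi0 kappa).

Lemma phiE r : ph r = exp (- (1/4) * RInt rkminus 0 r).
Proof. by []. Qed.

Lemma phi0E : phi0k = ph R0.
Proof. by []. Qed.

Lemma is_derive_phi r : is_derive ph r (- (1/4) * rkminus r * ph r).
Proof.
have := is_derive_comp exp (fun r => - (1/4) * RInt rkminus 0 r) r _ _ (is_derive_exp _)
  (is_derive_scal _ r (- (1/4)) _ (is_derive_RInt_cont rkminus_cont 0 r)).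
by rewrite /scal /= /mult /=.
Qed.

Lemma phi_cont r : continuous ph r.
Proof. by apply: ex_derive_continuous; eexists; apply: is_derive_phi. Qed.

Lemma phi_gt0 r : 0 < ph r.
Proof. exact: exp_pos. Qed.

Lemma phi_le a b : 0 <= a <= b -> ph b <= ph a.
Proof.
move/RInt_rkminus_le => ab; rewrite !phiE.
have : - (1/4) * RInt rkminus 0 b <= - (1/4) * RInt rkminus 0 a by lra.
by case/Rle_lt_or_eq_dec => [/exp_increasing|->]; [left | right].
Qed.

Lemma phi_le1 r : 0 <= r -> ph r <= 1.
Proof.
move=> r_ge0; have := phi_le 0 r (conj (Rle_refl 0) r_ge0).
by rewrite [ph 0]phiE RInt_point /zero /= Rmult_0_r exp_0.
Qed.

Lemma phi_tail r : R0 <= r -> ph r = phi0k.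
Proof. by move=> R0_r; rewrite phi0E !phiE RInt_rkminus_tail. Qed.

Lemma phi0_le_phi r : 0 <= r -> phi0k <= ph r.
Proof.
have [R0_ge0 _] := R0c_spec => r_ge0.
case: (Rle_lt_dec r R0) => [r_R0|R0_r]; first by apply: phi_le; lra.
by rewrite phi_tail; lra.
Qed.

Lemma phi0_gt0 : 0 < phi0k.
Proof. exact: phi_gt0. Qed.

Lemma Phi_cont r : continuous Ph r.
Proof. by apply: ex_derive_continuous; eexists; apply: is_derive_RInt_cont phi_cont 0 r. Qed.

Lemma Phi_le r : 0 <= r -> Ph r <= r.
Proof.
move=> r_ge0; have := RInt_le_const phi_cont 0 r 1 r_ge0 (fun x x_r => phi_le1 x ltac:(lra)).
by rewrite /Phi; lra.
Qed.

Lemma Phi_ge r : 0 <= r -> phi0k * r <= Ph r.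
Proof.
move=> r_ge0.
have := RInt_ge_const phi_cont 0 r phi0k r_ge0 (fun x x_r => phi0_le_phi x ltac:(lra)).
by rewrite /Phi; lra.
Qed.

Lemma Phi_ge0 r : 0 <= r -> 0 <= Ph r.
Proof. by move=> r_ge0; have := Phi_ge r r_ge0; have := phi0_gt0; nra. Qed.

Lemma Phi_mul_le s r : 0 <= s <= r -> Ph r * s <= Ph s * r.
Proof.
move=> [s_ge0 s_r]; rewrite /Phi (RInt_Chasles_cont phi_cont 0 s r) -/(Ph s).
have := RInt_le_const phi_cont s r (ph s) s_r (fun x x_sr => phi_le s x ltac:(lra)).
have := RInt_ge_const phi_cont 0 s (ph s) s_ge0 (fun x x_s => phi_le x s ltac:(lra)).
rewrite -/(Ph s); nra.
Qed.

Notation I := (Ic kappa).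
Notation et := (Defs.eta kappa).

Definition Phi_div_phi s := Ph s / ph s.

Lemma Phi_div_phi_cont s : continuous Phi_div_phi s.
Proof.
apply: (continuous_mult Ph (fun x => / ph x)); first exact: Phi_cont.
by apply: continuous_Rinv_comp; [apply: phi_cont | have := phi_gt0 s; lra].
Qed.

Lemma Phi_div_phi_ge0 s : 0 <= s -> 0 <= Phi_div_phi s.
Proof. by move=> s_ge0; apply: Rdiv_le_0_compat; [apply: Phi_ge0 | apply: phi_gt0]. Qed.

Lemma IcE : I = RInt Phi_div_phi 0 R1.
Proof. by []. Qed.

(* On [R0, R1] the weight phi is constant, while Phi r / r decreases. *)
Lemma Ic_ge r : R1 <= r -> Ph r / r * (R1 * R1 - R0 * R0) <= 2 * phi0k * I.
Proof.
have [R0_ge0 _] := R0c_spec; have [R0_R1 _] := R1c_spec => R1_r.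
have r_gt0 : 0 < r by lra.
have := RInt_le_cont (fun s => Ph r / r / phi0k * s) Phi_div_phi R0 R1 (Rlt_le _ _ R0_R1).
rewrite RInt_id_scal => /(_ _ Phi_div_phi_cont) mid.
have {}mid : Ph r / r / phi0k * (R1 * R1 - R0 * R0) / 2 <= RInt Phi_div_phi R0 R1.
  apply: mid => [x|x x_R].
    exact: (continuous_mult (fun _ => _) (fun y => y) x (continuous_const _ x) (continuous_id x)).
  rewrite /Phi_div_phi phi_tail; last lra.
  have := phi0_gt0 => phi0_pos.
  have -> : Ph r / r / phi0k * x = (Ph r * x / r) / phi0k by field; lra.
  apply: Rmult_le_compat_r; first by left; apply: Rinv_0_lt_compat.
  by apply/Rle_div_l => //; apply: Phi_mul_le; lra.
have := RInt_ge0_cont Phi_div_phi_cont 0 R0 R0_ge0 (fun x x_R0 => Phi_div_phi_ge0 x ltac:(lra)).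
rewrite IcE (RInt_Chasles_cont Phi_div_phi_cont 0 R0 R1) => ?.
have -> : Ph r / r * (R1 * R1 - R0 * R0)
  = 2 * phi0k * (Ph r / r / phi0k * (R1 * R1 - R0 * R0) / 2) by field; have := phi0_gt0; lra.
by apply: Rmult_le_compat_l; have := phi0_gt0; lra.
Qed.

Lemma Ic_gt0 : 0 < I.
Proof.
have [R0_ge0 _] := R0c_spec; have [R0_R1 _] := R1c_spec.
have := Ic_ge R1 (Rle_refl R1); have := Phi_ge R1 ltac:(lra); have := phi0_gt0 => ? ? ?.
have : 0 < Ph R1 / R1 * (R1 * R1 - R0 * R0).
  by apply: Rmult_lt_0_compat; [apply: Rdiv_lt_0_compat|]; nra.
nra.
Qed.

Lemma eta_ge0 : 0 <= et.
Proof.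
have [R0_ge0 _] := R0c_spec; have [R0_R1 _] := R1c_spec.
apply: Rdiv_le_0_compat; first by apply: Phi_ge0; lra.
by have := phi_gt0 R1; have := Ic_gt0; nra.
Qed.

Definition gtail_slope s :=
  2 * I * et / ((1 + 4 * et * (s - R1)) * (1 + 4 * et * (s - R1))).

Lemma is_derive_gtail s : R1 <= s ->
  is_derive (fun s => - (I / 2) / (1 + 4 * et * (s - R1))) s (gtail_slope s).
Proof.
move=> R1_s; have := eta_ge0 => et_ge0.
have : 0 < 1 + 4 * et * (s - R1) by nra.
by rewrite /gtail_slope => ?; auto_derive; [lra | field; lra].
Qed.

Lemma gtail_slope_cont s : R1 <= s -> continuous gtail_slope s.
Proof.
move=> R1_s; have := eta_ge0 => et_ge0.
have : 0 < 1 + 4 * et * (s - R1) by nra.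
by move=> ?; apply: ex_derive_continuous; rewrite /gtail_slope; auto_derive; nra.
Qed.

Definition gslope s := if Rle_dec s R1 then Phi_div_phi s else gtail_slope s.

Lemma gslope_cont s : continuous gslope s.
Proof.
apply: continuous_piecewise => [_|//|]; first exact: Phi_div_phi_cont.
  exact: gtail_slope_cont.
rewrite /Phi_div_phi /gtail_slope /Defs.eta Rminus_diag.
by have := Ic_gt0; have := phi_gt0 R1 => ? ?; field; lra.
Qed.

Lemma gslope_ge0 s : 0 <= s -> 0 <= gslope s.
Proof.
move=> s_ge0; rewrite /gslope; destruct (Rle_dec s R1) as [s_R1|s_R1].
  exact: Phi_div_phi_ge0.
have := eta_ge0; have := Ic_gt0; have := Rnot_le_lt _ _ s_R1 => ? ? ?.
have : 0 < 1 + 4 * et * (s - R1) by nra.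
by move=> ?; apply: Rdiv_le_0_compat; nra.
Qed.

(* [gfun] is glued at [R1] so that it is [C^1]: a single integral formula covers both pieces. *)
Lemma gfunE r : gfun kappa r = 1 - / (2 * I) * RInt gslope 0 r.
Proof.
have [R0_ge0 _] := R0c_spec; have [R0_R1 _] := R1c_spec; have := Ic_gt0; have := eta_ge0.
move=> et_ge0 I_gt0; rewrite /gfun; case: Rle_dec => r_R1 /=.
  do 2 f_equal; apply: RInt_ext => x x_r.
  rewrite /gslope; case: Rle_dec => // -[]; have := Rmax_lub 0 r R1 ltac:(lra) r_R1; lra.
rewrite (RInt_Chasles_cont gslope_cont 0 R1 r).
have -> : RInt gslope 0 R1 = I.
  rewrite IcE; apply: RInt_ext => x; rewrite Rmin_left ?Rmax_right; try lra.
  by move=> x_R1; rewrite /gslope; case: Rle_dec => // ?; lra.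
have -> : RInt gslope R1 r = RInt gtail_slope R1 r.
  apply: RInt_ext; rewrite Rmin_left ?Rmax_right; try lra.
  by move=> x x_r; rewrite /gslope; case: Rle_dec => // ?; lra.
pose G s := - (I / 2) / (1 + 4 * et * (s - R1)).
have tail : is_RInt gtail_slope R1 r (minus (G r) (G R1)).
  apply: is_RInt_derive => x; rewrite Rmin_left ?Rmax_right; try lra; move=> x_r.
  - by apply: is_derive_gtail; lra.
  - by apply: gtail_slope_cont; lra.
have : 0 < 1 + 4 * et * (r - R1) by nra.
rewrite (is_RInt_unique _ _ _ _ tail) /minus /plus /opp /= /G Rminus_diag => ?.
by field; lra.
Qed.

Lemma is_derive_gfun r : is_derive (gfun kappa) r (- / (2 * I) * gslope r).
Proof.
apply: (is_derive_ext (fun r => 1 - / (2 * I) * RInt gslope 0 r)) => [t|].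
  by rewrite gfunE.
auto_derive; last ring.
split; first exact: ex_RInt_cont gslope_cont 0 r.
split=> //; apply: filter_forall => y.
by apply/continuity_pt_filterlim; apply: gslope_cont.
Qed.

Lemma gfun_cont r : continuous (gfun kappa) r.
Proof. by apply: ex_derive_continuous; eexists; apply: is_derive_gfun. Qed.

Lemma gfun_bounds r : 0 <= r -> 1/4 <= gfun kappa r <= 1.
Proof.
have [R0_ge0 _] := R0c_spec; have [R0_R1 _] := R1c_spec; have := Ic_gt0; have := eta_ge0.
move=> et_ge0 I_gt0 r_ge0; rewrite /gfun; case: Rle_dec => r_R1 /=.
  change (RInt (fun s => Ph s / ph s) 0 r) with (RInt Phi_div_phi 0 r).
  have := RInt_ge0_cont Phi_div_phi_cont 0 r r_ge0 (fun x x_r => Phi_div_phi_ge0 x ltac:(lra)).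
  have := RInt_ge0_cont Phi_div_phi_cont r R1 r_R1 (fun x x_r => Phi_div_phi_ge0 x ltac:(lra)).
  have := RInt_Chasles_cont Phi_div_phi_cont 0 r R1; rewrite -IcE => split_I ? ?.
  have : 0 <= / (2 * I) * RInt Phi_div_phi 0 r.
    by apply: Rmult_le_pos => //; left; apply: Rinv_0_lt_compat; lra.
  have : / (2 * I) * RInt Phi_div_phi 0 r <= 1/2.
    apply: (Rmult_le_reg_l (2 * I)); first lra.
    by rewrite -Rmult_assoc Rinv_r; lra.
  lra.
have : 0 < 1 + 4 * et * (r - R1) by nra.
move=> den_gt0.
have : 0 <= et * (r - R1) / (1 + 4 * et * (r - R1)) by apply: Rdiv_le_0_compat; nra.
have : et * (r - R1) / (1 + 4 * et * (r - R1)) <= 1/4 by apply/Rle_div_l => //; lra.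
lra.
Qed.

Lemma Derive_ffun_cont s : continuous (fun s => ph s * gfun kappa s) s.
Proof. exact: (continuous_mult ph (gfun kappa) s (phi_cont s) (gfun_cont s)). Qed.

Lemma Derive_ffun r : Derive (ffun kappa) r = ph r * gfun kappa r.
Proof. by apply: is_derive_unique; apply: is_derive_RInt_cont Derive_ffun_cont 0 r. Qed.

Lemma Derive2_ffun r : Derive (Derive (ffun kappa)) r
  = - (1/4) * rkminus r * ph r * gfun kappa r - ph r * gslope r / (2 * I).
Proof.
rewrite (Derive_ext _ (fun r => ph r * gfun kappa r)) => [|t]; last exact: Derive_ffun.
apply: is_derive_unique.
have := is_derive_mult _ _ r _ _ (is_derive_phi r) (is_derive_gfun r) Rmult_comm.
rewrite /plus /mult /=.
suff -> : - (1/4) * rkminus r * ph r * gfun kappa r - ph r * gslope r / (2 * I)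
  = - (1/4) * rkminus r * ph r * gfun kappa r + ph r * (- / (2 * I) * gslope r) by [].
by field; have := Ic_gt0; lra.
Qed.

Lemma ffun0 : ffun kappa 0 = 0.
Proof. exact: RInt_point. Qed.

Lemma ffun_bounds r : 0 <= r -> phi0k * r / 4 <= ffun kappa r <= Ph r.
Proof.
move=> r_ge0; split.
- suff : phi0k / 4 * (r - 0) <= ffun kappa r by lra.
  apply: (RInt_ge_const Derive_ffun_cont) => // x x_r.
  have := gfun_bounds x ltac:(lra); have := phi0_le_phi x ltac:(lra).
  by have := phi0_gt0; nra.
- apply: RInt_le_cont => //; [exact: Derive_ffun_cont | exact: phi_cont | move=> x x_r].
  by have := gfun_bounds x ltac:(lra); have := phi_gt0 x; nra.
Qed.

Lemma Derive_ffun_bounds r : 0 <= r -> 0 <= Derive (ffun kappa) r <= 1.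
Proof.
move=> r_ge0; rewrite Derive_ffun.
by have := gfun_bounds r r_ge0; have := phi_gt0 r; have := phi_le1 r r_ge0; nra.
Qed.

Lemma Derive2_ffun_le0 r : 0 <= r -> Derive (Derive (ffun kappa)) r <= 0.
Proof.
move=> r_ge0; rewrite Derive2_ffun.
have := gfun_bounds r r_ge0; have := phi_gt0 r; have := rkminus_ge0 r r_ge0.
have := gslope_ge0 r r_ge0; have := Ic_gt0 => I_gt0 ? ? ? ?.
have : 0 <= rkminus r * ph r * gfun kappa r by apply: Rmult_le_pos; [apply: Rmult_le_pos|]; lra.
have : 0 <= ph r * gslope r / (2 * I) by apply: Rdiv_le_0_compat; nra.
lra.
Qed.

Lemma kappa_gt0_tail r : R1 < r -> 0 < kappa r.
Proof.
have [R0_ge0 _] := R0c_spec; have [R0_R1 R1_tail] := R1c_spec => R1_r.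
have := R1_tail r R1_r; have : 0 < R1 * (R1 - R0) by nra.
by move=> ? ?; apply: Rnot_le_lt => ?; nra.
Qed.

Lemma Phi_div_Ic_le_tail r : R1 < r -> Ph r / I <= r * kappa r * phi0k / 8.
Proof.
have [R0_ge0 _] := R0c_spec; have [R0_R1 R1_tail] := R1c_spec => R1_r.
have r_gt0 : 0 < r by lra.
have I_gt0 := Ic_gt0; have := kappa_gt0_tail r R1_r; have := phi0_gt0 => phi0_pos kappa_pos.
have := Ic_ge r (Rlt_le _ _ R1_r) => Phi_r.
have sq_gt0 : 0 < R1 * R1 - R0 * R0 by nra.
have : 16 <= kappa r * (R1 * R1 - R0 * R0) by have := R1_tail r R1_r; nra.
have : Ph r / I * (R1 * R1 - R0 * R0) <= 2 * phi0k * r.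
  have -> : Ph r / I * (R1 * R1 - R0 * R0) = Ph r / r * (R1 * R1 - R0 * R0) * (r / I).
    by field; lra.
  have -> : 2 * phi0k * r = 2 * phi0k * I * (r / I) by field; lra.
  by apply: Rmult_le_compat_r => //; apply: Rdiv_le_0_compat; lra.
have : 0 <= Ph r / I by apply: Rdiv_le_0_compat; [apply: Phi_ge0|]; lra.
have : 0 < r * kappa r * phi0k by apply: Rmult_lt_0_compat; nra.
nra.
Qed.

Lemma ffun_ode_le r : 0 < r ->
  Derive (Derive (ffun kappa)) r - r * kappa r * Derive (ffun kappa) r / 4
  <= - (c0 kappa * ffun kappa r) / 2.
Proof.
move=> r_gt0; have I_gt0 := Ic_gt0; have [_ f_Phi] := ffun_bounds r (Rlt_le _ _ r_gt0).
have [g_lo g_hi] := gfun_bounds r (Rlt_le _ _ r_gt0).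
have c0f_le : c0 kappa * ffun kappa r <= Ph r / I.
  by rewrite /c0 /Rdiv Rmult_comm; apply: Rmult_le_compat_r => //; left; apply: Rinv_0_lt_compat.
case: (Rle_lt_dec r R1) => [r_R1|R1_r].
- rewrite Derive2_ffun Derive_ffun /gslope; destruct (Rle_dec r R1) as [r_R1'|]; last lra.
  have := neg_kappa_le_kminus r r_gt0; have := phi_gt0 r => phi_gt0r ?.
  have : 0 <= r * (kappa r + kminus kappa r) * (ph r * gfun kappa r).
    by apply: Rmult_le_pos; nra.
  have -> : ph r * Phi_div_phi r = Ph r by rewrite /Phi_div_phi; field; lra.
  rewrite /rkminus; have -> : Ph r / (2 * I) = Ph r / I / 2 by field; lra.
  nra.
- have := Derive2_ffun_le0 r (Rlt_le _ _ r_gt0).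
  rewrite Derive_ffun phi_tail; last by have [? _] := R1c_spec; lra.
  have := Phi_div_Ic_le_tail r R1_r.
  have : r * kappa r * phi0k * (1/4) <= r * kappa r * phi0k * gfun kappa r.
    apply: Rmult_le_compat_l => //; have := kappa_gt0_tail r R1_r; have := phi0_gt0.
    by move=> ? ?; apply: Rmult_le_pos; nra.
  nra.
Qed.

Lemma radial_term_le sigma delta S D l2 r :
  0 < sigma -> 0 < delta -> 0 <= S -> (0 < r < delta -> r * kminus kappa r <= S) ->
  0 <= l2 <= 1 -> (delta <= r -> l2 = 1) -> 0 <= r ->
  (0 < r -> D <= - (sigma ^ 2 / 2) * kappa r * (r * r)) ->
  (if Req_EM_T r 0 then 0 else / r * D * Derive (ffun kappa) r)
    + 2 * sigma ^ 2 * l2 * Derive (Derive (ffun kappa)) r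
  <= sigma ^ 2 / 2 * S + c0 kappa * sigma ^ 2 * delta - c0 kappa * sigma ^ 2 * ffun kappa r.
Proof.
move=> sigma_gt0 delta_gt0 S_ge0 S_sup l2_01 l2_far r_ge0 drift.
have c0_gt0 : 0 < c0 kappa by apply: Rinv_0_lt_compat; apply: Ic_gt0.
have s2_gt0 : 0 < sigma ^ 2 by apply: pow_lt.
set s2 := sigma ^ 2 in drift s2_gt0 *.
have c0s2_gt0 : 0 < c0 kappa * s2 by apply: Rmult_lt_0_compat.
have f''_le0 := Derive2_ffun_le0 r r_ge0; have [f'_ge0 f'_le1] := Derive_ffun_bounds r r_ge0.
have curv_le0 : 2 * s2 * l2 * Derive (Derive (ffun kappa)) r <= 0.
  have : 0 <= 2 * s2 * l2 by nra.
  nra.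
case: Req_EM_T => [r0|r_ne0] /=.
  by rewrite r0 in curv_le0 *; rewrite ffun0; nra.
have r_gt0 : 0 < r by lra.
have {}drift : / r * D <= - (s2 / 2) * kappa r * r.
  have -> : - (s2 / 2) * kappa r * r = / r * (- (s2 / 2) * kappa r * (r * r)) by field; lra.
  by apply: Rmult_le_compat_l (drift r_gt0); left; apply: Rinv_0_lt_compat.
have [_ f_Phi] := ffun_bounds r r_ge0; have := Phi_le r r_ge0 => Phi_r.
case: (Rlt_le_dec r delta) => [r_delta|delta_r].
- have S_r := S_sup (conj r_gt0 r_delta).
  have kminus_r : s2 / 2 * r * (- kappa r) <= s2 / 2 * r * kminus kappa r.
    by apply: Rmult_le_compat_l; [nra | apply: neg_kappa_le_kminus].
  have drift_S : / r * D <= s2 / 2 * S.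
    by have : s2 / 2 * (r * kminus kappa r) <= s2 / 2 * S; [apply: Rmult_le_compat_l; lra | nra].
  have : / r * D * Derive (ffun kappa) r <= s2 / 2 * S.
    by case: (Rle_lt_dec 0 (/ r * D)) => ?; nra.
  have : c0 kappa * s2 * ffun kappa r <= c0 kappa * s2 * delta.
    by apply: Rmult_le_compat_l; lra.
  lra.
- rewrite (l2_far delta_r) Rmult_1_r.
  have := ffun_ode_le r r_gt0.
  have : / r * D * Derive (ffun kappa) r <= - (s2 / 2) * kappa r * r * Derive (ffun kappa) r.
    exact: Rmult_le_compat_r.
  have : 0 <= s2 / 2 * S + c0 kappa * s2 * delta by nra.
  nra.
Qed.

Lemma sup_rkminus_spec delta : 0 < delta ->
  let S := real (Lub_Rbar (fun v => exists r, 0 < r < delta /\ v = r * kminus kappa r)) in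
  0 <= S /\ forall r, 0 < r < delta -> r * kminus kappa r <= S.
Proof.
move=> delta_gt0 S.
have S_ub : forall r, 0 < r < delta -> r * kminus kappa r <= S.
  move=> r r_delta; apply: (Lub_Rbar_real_ub _ (delta * Rmax (- kappa_min) 0)
    (delta / 2 * kminus kappa (delta / 2))); last by exists r.
    by move=> v [s [s_delta ->]]; have := kminus_bounds s; nra.
  by exists (delta / 2); split; lra.
split=> //; have := S_ub (delta / 2) ltac:(lra); have := kminus_bounds (delta / 2); nra.
Qed.

Lemma drift_dot_le {d} sigma (b : vec d -> vec d) (x y : vec d) : 0 < sigma ->
  kappa_drift_bound sigma b kappa ->
  0 < vnorm (vsub x y) ->
  dot (vsub x y) (vsub (b x) (b y))
  <= - (sigma ^ 2 / 2) * kappa (vnorm (vsub x y)) * (vnorm (vsub x y) * vnorm (vsub x y)).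
Proof.
move=> sigma_gt0 drift r_gt0; have := drift _ r_gt0 x y erefl.
set r := vnorm _ in r_gt0 *; set D := dot _ _ => kappa_D.
have s2_gt0 : 0 < sigma ^ 2 by apply: pow_lt.
have : kappa r * (sigma ^ 2 * (r * r))
       <= - (2 / sigma ^ 2) * D / r ^ 2 * (sigma ^ 2 * (r * r)).
  by apply: Rmult_le_compat_r => //; nra.
have -> : - (2 / sigma ^ 2) * D / r ^ 2 * (sigma ^ 2 * (r * r)) = - 2 * D.
  by field; split; lra.
nra.
Qed.

Lemma lhs_term_le {N d} sigma b (gamma : 'I_N -> ('I_N -> vec d) -> vec d) lam delta
    (X Y : 'I_N -> vec d) i :
  0 < sigma -> 0 < delta ->
  kappa_drift_bound sigma b kappa ->
  (forall z, Rabs (lam z) <= 1) -> (forall z, delta <= vnorm z -> lam z = 1) ->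
  lhs_term sigma kappa b gamma lam X Y i
  <= m_delta sigma kappa delta - c0 kappa * sigma ^ 2 * ffun kappa (vnorm (vsub (X i) (Y i)))
     + vnorm (vsub (gamma i X) (gamma i Y)).
Proof.
move=> sigma_gt0 delta_gt0 drift lam_le1 lam_far; rewrite /lhs_term /m_delta.
have [S_ge0 S_sup] := sup_rkminus_spec delta delta_gt0.
set S := real _ in S_ge0 S_sup *; set Z := vsub (X i) (Y i); set r := vnorm Z.
set w := vsub (gamma i X) (gamma i Y); set Db := dot Z (vsub (b (X i)) (b (Y i))).
have r_ge0 : 0 <= r by apply: vnorm_ge0.
have -> : dot Z (vsub (bi b gamma i X) (bi b gamma i Y)) = Db + dot Z w.
  by rewrite -dot_addr; apply: eq_bigr => k _; rewrite /w /bi /vsub /vadd; ring.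
have l2_01 : 0 <= lam Z ^ 2 <= 1.
  by rewrite -pow2_abs; have := lam_le1 Z; have := Rabs_pos (lam Z); nra.
have l2_far : delta <= r -> lam Z ^ 2 = 1 by move=> r_far; rewrite lam_far // pow1.
have := radial_term_le sigma delta S Db (lam Z ^ 2) r sigma_gt0 delta_gt0 S_ge0 (S_sup r) l2_01
  l2_far r_ge0 (drift_dot_le sigma b (X i) (Y i) sigma_gt0 drift).
suff : (if Req_EM_T r 0 then 0 else / r * (Db + dot Z w) * Derive (ffun kappa) r)
       <= (if Req_EM_T r 0 then 0 else / r * Db * Derive (ffun kappa) r) + vnorm w by lra.
destruct (Req_EM_T r 0) as [r0|r_ne0] => /=; first by have := vnorm_ge0 w; lra.
have r_gt0 : 0 < r by lra.
have [f'_ge0 f'_le1] := Derive_ffun_bounds r r_ge0.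
have : dot Z w / r <= vnorm w by apply/Rle_div_l => //; rewrite Rmult_comm; apply: dot_le_vnorm_mul.
have -> : / r * (Db + dot Z w) * Derive (ffun kappa) r
  = / r * Db * Derive (ffun kappa) r + dot Z w / r * Derive (ffun kappa) r by field; lra.
by have := vnorm_ge0 w; case: (Rle_lt_dec 0 (dot Z w / r)) => ? ? ?; nra.
Qed.

Lemma perturbation_le {N d} sigma (gamma : 'I_N -> ('I_N -> vec d) -> vec d) L
    (X Y : 'I_N -> vec d) :
  0 < sigma -> perturbation_assumption gamma L ->
  L < c0 kappa * phi0k * sigma ^ 2 / 8 ->
  rsum (fun i => vnorm (vsub (gamma i X) (gamma i Y)))
  <= c0 kappa * sigma ^ 2 / 2 * rsum (fun i => ffun kappa (vnorm (vsub (X i) (Y i)))).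
Proof.
move=> sigma_gt0 /(_ X Y) pert L_small; apply: (Rle_trans _ _ _ pert).
set rr := rsum _; set ff := rsum _; set K := c0 kappa * sigma ^ 2 / 2.
have phi0_pos := phi0_gt0.
have rr_le : rr <= 4 / phi0k * ff.
  rewrite -rsumZ; apply: rsum_le => i.
  have [f_lo _] := ffun_bounds _ (vnorm_ge0 (vsub (X i) (Y i))).
  rewrite {1}(_ : vnorm _ = 4 / phi0k * (phi0k * vnorm (vsub (X i) (Y i)) / 4));
    last by field; lra.
  by apply: Rmult_le_compat_l f_lo; apply: Rdiv_le_0_compat; lra.
have rr_ge0 : 0 <= rr by apply: rsum_ge0 => i; apply: vnorm_ge0.
have K_gt0 : 0 < K.
  apply: Rdiv_lt_0_compat; last lra.
  by apply: Rmult_lt_0_compat; [apply: Rinv_0_lt_compat; apply: Ic_gt0 | apply: pow_lt].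
have L_K : L * (4 / phi0k) <= K.
  have -> : L * (4 / phi0k) = 8 * L / phi0k / 2 by field; lra.
  have -> : K = c0 kappa * phi0k * sigma ^ 2 / phi0k / 2 by rewrite /K; field; lra.
  apply: Rmult_le_compat_r; first lra.
  by apply: Rmult_le_compat_r; [left; apply: Rinv_0_lt_compat | lra].
have ff_ge0 : 0 <= ff.
  apply: rsum_ge0 => i; have [f_lo _] := ffun_bounds _ (vnorm_ge0 (vsub (X i) (Y i))).
  by have := vnorm_ge0 (vsub (X i) (Y i)); nra.
case: (Rle_lt_dec L 0) => [L_le0|L_gt0]; first by nra.
have : L * rr <= L * (4 / phi0k * ff) by apply: Rmult_le_compat_l; lra.
have : L * (4 / phi0k) * ff <= K * ff by apply: Rmult_le_compat_r; nra.
lra.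
Qed.

End Profile.

Theorem lemma2 (N d : nat) (sigma : R) (b : vec d -> vec d)
  (gamma : 'I_N -> ('I_N -> vec d) -> vec d) (kappa : R -> R) (L delta : R)
  (lam : vec d -> R) :
  (0 < N)%nat -> (0 < d)%nat -> 0 < sigma ->
  drift_assumption sigma b kappa ->
  perturbation_assumption gamma L ->
  0 < delta ->
  smooth lam ->
  (forall z, Rabs (lam z) <= 1) ->
  (forall z, delta <= vnorm z -> lam z = 1) ->
  L < c0 kappa * phi0 kappa * sigma ^ 2 / 8 ->
  forall X Y : 'I_N -> vec d,
    rsum (lhs_term sigma kappa b gamma lam X Y)
    <= INR N * m_delta sigma kappa delta
       - (c0 kappa * sigma ^ 2 / 2) * rsum (fun i => ffun kappa (vnorm (vsub (X i) (Y i)))).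
Proof.
move=> _ _ sigma_gt0 [drift [kappa_cont [[kmin kappa_ge] [eps [eps_gt0 [Rt kappa_tail]]]]]]
  pert delta_gt0 _ lam_le1 lam_far L_small X Y.
have terms_le i := lhs_term_le kappa_cont kappa_ge eps_gt0 kappa_tail
  sigma b gamma lam delta X Y i sigma_gt0 delta_gt0 drift lam_le1 lam_far.
have := rsum_le _ _ terms_le.
rewrite (rsumD (fun i => m_delta sigma kappa delta - _ * ffun kappa _)) rsumB rsum_const rsumZ.
have := perturbation_le kappa_cont kappa_ge eps_gt0 kappa_tail
  sigma gamma L X Y sigma_gt0 pert L_small.
lra.
Qed.
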